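(* Let $K$ and $L$ be number fields (inside a fixed algebraic closure of $\mathbb{Q}$). Then \[\frac{1}{[\widetilde K\widetilde L:\mathbb{Q}]}\le \delta_{K,L}\le 1,\] where equality on the right holds if and only if $\widetilde K=\widetilde L$, and equality on the left holds if and only if $K=\mathbb{Q}$ or $L=\mathbb{Q}$.
   Context: $\widetilde E$ denotes the Galois closure of a number field $E$ over $\mathbb{Q}$, and $\widetilde K\widetilde L$ the compositum. $\delta_{K,L}:=\frac{2}{[\widetilde K\widetilde L:\mathbb{Q}]}+1-\frac{1}{[\widetilde K:\mathbb{Q}]}-\frac{1}{[\widetilde L:\mathbb{Q}]}$. *)

From HB Require Import structures.
From mathcomp Require Import all_boot all_order all_algebra all_fingroup all_field.
Set Implicit Arguments. Unset Strict Implicit. Unset Printing Implicit Defensive.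
Import GRing.Theory.
Local Open Scope ring_scope.

(* Ambient field: a finite normal (= Galois, char 0) extension L0 of Q,
   playing the role of the fixed algebraic closure (every pair of number
   fields lies in such an L0 together with their Galois closures). *)

Definition gal_closure (L0 : splittingFieldType rat) (K : {subfield L0})
  : {subfield L0} :=
  <<(\sum_(s in ('Gal({:L0} / 1%AS))%g) (s @: K))%VS>>%AS.

Definition degQ (L0 : splittingFieldType rat) (E : {vspace L0}) : rat :=
  (\dim E)%:R.

Definition delta (L0 : splittingFieldType rat) (K L : {subfield L0}) : rat :=
  2 / degQ (gal_closure K * gal_closure L)%AS + 1
  - 1 / degQ (gal_closure K) - 1 / degQ (gal_closure L).

From HB Require Import structures.
From mathcomp Require Import all_boot all_order all_algebra all_fingroup all_field.
From mathcomp Require Import lra.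

Set Implicit Arguments.
Unset Strict Implicit.
Unset Printing Implicit Defensive.

Import GRing.Theory Num.Theory.
Local Open Scope ring_scope.

(* With x = 1/[K~:Q], y = 1/[L~:Q] and z = 1/[K~L~:Q] we have
   delta = 2z + 1 - x - y, and the degree inequalities
   [K~:Q], [L~:Q] <= [K~L~:Q] <= [K~:Q][L~:Q] become xy <= z <= min(x, y).
   So delta <= 1 follows from z <= x, y, with equality iff K~, L~ and K~L~
   have the same degree, i.e. K~ = L~; and
   delta - z = z + 1 - x - y >= xy + 1 - x - y = (1 - x)(1 - y) >= 0,
   with equality iff x = 1 or y = 1, i.e. K~ = Q or L~ = Q, which happens
   exactly when K = Q or L = Q. *)

Lemma delta_bounds (R : realFieldType) (x y z : R) :
    0 < x <= 1 -> 0 < y <= 1 -> z <= x -> z <= y -> x * y <= z ->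
  [/\ z <= 2 * z + 1 - x - y, 2 * z + 1 - x - y <= 1,
      2 * z + 1 - x - y = 1 <-> z = x /\ z = y &
      z = 2 * z + 1 - x - y <-> x = 1 \/ y = 1].
Proof.
move=> /andP[x_gt0 x_le1] /andP[y_gt0 y_le1] z_lex z_ley xy_lez.
have ge0 : 0 <= (1 - x) * (1 - y) by apply: mulr_ge0; rewrite subr_ge0.
split; [nra | lra | by split=> [? | [-> ->]]; [split; lra | lra] |].
split=> [delta_z | [] ?]; [| by subst; lra | by subst; lra].
have /eqP : (1 - x) * (1 - y) = 0 by nra.
by rewrite mulf_eq0 !subr_eq0 => /orP[] /eqP <-; [left | right].
Qed.

Lemma dim_prodv_eqP (F0 : fieldType) (L : fieldExtType F0) (E F : {subfield L}) :
  \dim (E * F)%AS = \dim E /\ \dim (E * F)%AS = \dim F <-> E = F.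
Proof.
split=> [[dimE dimF] | ->]; last by rewrite /= prodv_id.
have eq_prodv (M : {subfield L}) : (M <= E * F)%VS -> \dim (E * F)%AS = \dim M ->
    (M : {vspace L}) = (E * F)%VS.
  by move=> sM dimM; apply/eqP; rewrite eqEdim sM -dimM leqnn.
apply/val_inj/(etrans (eq_prodv E (field_subvMr E F) dimE)).
exact/esym/eq_prodv/dimF/field_subvMl.
Qed.

Lemma dimv_eq1 (F0 : fieldType) (L : fieldExtType F0) (E : {subfield L}) :
  \dim E = 1%N <-> E = 1%AS.
Proof.
split=> [dimE1 | ->]; last exact: dimv1.
by apply/val_inj/eqP; rewrite /= eq_sym eqEdim sub1v dimE1 dimv1.
Qed.

Section Degrees.
Variable L0 : splittingFieldType rat.

Lemma invdegQ_itv (E : {subfield L0}) : 0 < (degQ E)^-1 <= 1.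
Proof. by rewrite invr_gt0 invf_le1 ?ltr0n ?ler1n ?adim_gt0. Qed.

Lemma invdegQ_le (E : {subfield L0}) (F : {vspace L0}) :
  (E <= F)%VS -> (degQ F)^-1 <= (degQ E)^-1.
Proof.
move=> sEF; have dimF_gt0 := leq_trans (adim_gt0 E) (dimvS sEF).
by rewrite lef_pV2 ?posrE ?ltr0n ?adim_gt0 // ler_nat dimvS.
Qed.

Lemma invdegQ_prodv (E F : {subfield L0}) :
  (degQ E)^-1 * (degQ F)^-1 <= (degQ (E * F)%AS)^-1.
Proof.
rewrite -invfM /degQ -natrM lef_pV2 ?posrE ?ltr0n ?muln_gt0 ?adim_gt0 //.
by rewrite ler_nat dim_prodv.
Qed.

Lemma invdegQ_inj (E F : {vspace L0}) :
  (degQ E)^-1 = (degQ F)^-1 <-> \dim E = \dim F.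
Proof.
by rewrite /degQ; split=> [/invr_inj/eqP | ->] //; rewrite eqr_nat => /eqP.
Qed.

Lemma invdegQ_eq1 (E : {subfield L0}) : (degQ E)^-1 = 1 <-> E = 1%AS.
Proof.
rewrite -dimv_eq1 /degQ; split=> [/eqP | ->]; last exact: invr1.
by rewrite invr_eq1 pnatr_eq1 => /eqP.
Qed.

End Degrees.

Section GaloisClosure.
Variable L0 : splittingFieldType rat.
Implicit Type K : {subfield L0}.

Lemma sub_gal_closure K : (K <= gal_closure K)%VS.
Proof.
apply: subv_trans (sub_agenv _); apply: (sumv_sup 1%g) => //.
by apply/subvP => x Kx; rewrite -[x](gal_id {:L0}); apply: memv_img.
Qed.

Lemma gal_closure1 : gal_closure (1%AS : {subfield L0}) = 1%AS.
Proof.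
apply/val_inj/eqP; rewrite /= eqEsubv sub1v andbT.
apply: agenv_sub_modl; first exact: subvv.
by rewrite prodv1; apply/subv_sumP => s _; rewrite aimg1.
Qed.

Lemma gal_closure_eq1 K : gal_closure K = 1%AS <-> K = 1%AS.
Proof.
split=> [closureK1 | ->]; last exact: gal_closure1.
apply/val_inj/eqP; rewrite /= eqEsubv sub1v andbT.
by have := sub_gal_closure K; rewrite closureK1.
Qed.

End GaloisClosure.

Theorem proposition2p12 (L0 : splittingFieldType rat) (K L : {subfield L0}) :
  [/\ 1 / degQ (gal_closure K * gal_closure L)%AS <= delta K L,
      delta K L <= 1,
      (delta K L = 1 <-> gal_closure K = gal_closure L) &
      (1 / degQ (gal_closure K * gal_closure L)%AS = delta K L
         <-> K = 1%AS \/ L = 1%AS)].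
Proof.
rewrite /delta !div1r; set K' := gal_closure K; set L' := gal_closure L.
have [] := delta_bounds (invdegQ_itv K') (invdegQ_itv L')
  (invdegQ_le (field_subvMr K' L')) (invdegQ_le (field_subvMl K' L'))
  (invdegQ_prodv K' L').
by rewrite !invdegQ_inj dim_prodv_eqP !invdegQ_eq1 !gal_closure_eq1.
Qed.
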